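(* Let $B$ be a C*-algebra and $A\subseteq B$ a closed *-subalgebra satisfying the ideal intersection property relative to $B$. Let $J$ be a closed two-sided ideal of $B$. Then $$\mathrm{Ann}_B(\langle J\cap A\rangle_B)=\mathrm{Ann}_B(J).$$
   Context: $\langle S\rangle_B=[BSB]$ denotes the closed two-sided ideal of $B$ generated by $S\subseteq B$, where $[\cdot]$ is closed linear span. For a closed two-sided ideal $K$ of $B$, $\mathrm{Ann}_B(K)=\{x\in B: xk=0\ \forall k\in K\}$ (which equals $\{x\in B: kx=0\ \forall k\in K\}$). $A$ satisfies the ideal intersection property relative to $B$ if $J\cap A\neq\{0\}$ for every nonzero closed two-sided ideal $J$ of $B$. *)

From mathcomp Require Import all_boot all_algebra.
From mathcomp Require Import all_classical all_reals all_analysis.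
From mathcomp Require Import complex.
Set Implicit Arguments. Unset Strict Implicit. Unset Printing Implicit Defensive.
Import GRing.Theory Num.Theory.
Local Open Scope ring_scope.
Local Open Scope classical_set_scope.

Record is_Cstar_algebra (R : realType) (V : completeNormedModType R[i])
    (mul : V -> V -> V) (star : V -> V) : Prop := {
  cs_mulA : forall x y z, mul x (mul y z) = mul (mul x y) z;
  cs_mulDl : forall x y z, mul (x + y) z = mul x z + mul y z;
  cs_mulDr : forall x y z, mul x (y + z) = mul x y + mul x z;
  cs_mulZl : forall (a : R[i]) x y, mul (a *: x) y = a *: mul x y;
  cs_mulZr : forall (a : R[i]) x y, mul x (a *: y) = a *: mul x y;
  cs_starK : forall x, star (star x) = x;
  cs_starD : forall x y, star (x + y) = star x + star y;
  cs_starZ : forall (a : R[i]) x, star (a *: x) = (Num.conj a) *: star x;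
  cs_starM : forall x y, star (mul x y) = mul (star y) (star x);
  cs_norm_mul : forall x y, `|mul x y| <= `|x| * `|y|;
  cs_Cstar : forall x, `|mul (star x) x| = `|x| ^+ 2
}.

Section Defs.
Context {R : realType} {V : completeNormedModType R[i]}.
Variable mul : V -> V -> V.
Variable star : V -> V.

Definition is_subspace (W : set V) : Prop :=
  W 0 /\ forall (a : R[i]) x y, W x -> W y -> W (a *: x + y).

Definition is_closed_subspace (W : set V) : Prop := is_subspace W /\ closed W.

Definition clspan (S : set V) : set V :=
  [set x | forall W, is_closed_subspace W -> S `<=` W -> W x].

Definition is_closed_ideal (K : set V) : Prop :=
  is_closed_subspace K /\
  (forall b k, K k -> K (mul b k)) /\ (forall b k, K k -> K (mul k b)).

Definition is_closed_star_subalgebra (A : set V) : Prop :=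
  is_closed_subspace A /\
  (forall x y, A x -> A y -> A (mul x y)) /\ (forall x, A x -> A (star x)).

Definition gen_ideal (S : set V) : set V :=
  clspan [set x | exists b s c, S s /\ x = mul (mul b s) c].

Definition Ann (K : set V) : set V :=
  [set x | forall k, K k -> mul x k = 0].

Definition ideal_intersection_property (A : set V) : Prop :=
  forall J, is_closed_ideal J -> J <> [set 0] -> J `&` A <> [set 0].

End Defs.

From mathcomp Require Import all_boot all_algebra.
From mathcomp Require Import all_classical all_reals all_analysis.
From mathcomp Require Import complex.
Import order.Order.TTheory GRing.Theory Num.Theory.
Local Open Scope classical_set_scope.
Local Open Scope ring_scope.

(* Since <J ∩ A>_B ⊆ J, every annihilator of J annihilates <J ∩ A>_B.
   Conversely L := J ∩ Ann_B(<J ∩ A>_B) is a closed ideal of B.  An element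
   a of L ∩ A lies in J ∩ A, so it annihilates a^* a a^* ∈ <J ∩ A>_B; then
   (a a^* )^2 = 0, and the C*-identity gives a a^* = 0 and a = 0.  Hence
   L ∩ A = 0 and, by the ideal intersection property, L = 0.  For x in
   Ann_B(<J ∩ A>_B) and k in J the product x k lies in L, so x k = 0. *)

Lemma klipschitz_continuous (K : numFieldType) (V W : normedModType K)
    (k : K) (f : V -> W) :
  0 <= k -> k.-lipschitz f -> continuous f.
Proof.
move=> k_ge0 f_lip x; apply/cvgrPdist_lt => e e_gt0.
have k1_gt0 : 0 < k + 1 by rewrite ltr_wpDl.
near=> y; apply: (le_lt_trans (f_lip (x, y) (conj I I))) => /=.
have : `|x - y| < e / (k + 1).
  by near: y; apply: cvgr_dist_lt => //; rewrite divr_gt0.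
rewrite ltr_pdivlMr // => /(le_lt_trans _); apply.
by rewrite mulrC; apply: ler_wpM2l; rewrite ?lerDl.
Unshelve. all: by end_near. Qed.

Section CstarAlgebra.
Context {R : realType} {V : completeNormedModType R[i]}.
Context {mul : V -> V -> V} {star : V -> V}.
Hypothesis HB : is_Cstar_algebra mul star.

Lemma cs_mulx0 x : mul x 0 = 0.
Proof. by rewrite -[X in mul x X](scale0r (0 : V)) (cs_mulZr HB) scale0r. Qed.

Lemma cs_mul0x x : mul 0 x = 0.
Proof. by rewrite -[X in mul X x](scale0r (0 : V)) (cs_mulZl HB) scale0r. Qed.

Lemma cs_star0 : star 0 = 0.
Proof. by rewrite -[X in star X](scale0r (0 : V)) (cs_starZ HB) conjC0 scale0r. Qed.

Lemma cs_mulBr x y z : mul x (y - z) = mul x y - mul x z.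
Proof. by rewrite (cs_mulDr HB) -scaleN1r (cs_mulZr HB) scaleN1r. Qed.

Lemma cs_mulBl x y z : mul (x - y) z = mul x z - mul y z.
Proof. by rewrite (cs_mulDl HB) -scaleN1r (cs_mulZl HB) scaleN1r. Qed.

Lemma cs_continuous_mull b : continuous (mul b).
Proof.
apply: (@klipschitz_continuous _ _ _ `|b|) => // -[x y] _ /=.
by rewrite -cs_mulBr (cs_norm_mul HB).
Qed.

Lemma cs_continuous_mulr c : continuous (mul^~ c).
Proof.
apply: (@klipschitz_continuous _ _ _ `|c|) => // -[x y] _ /=.
by rewrite -cs_mulBl mulrC (cs_norm_mul HB).
Qed.

Lemma cs_star_mul_eq0 x : mul (star x) x = 0 -> x = 0.
Proof.
move=> xx0; have := cs_Cstar HB x; rewrite xx0 normr0 => /esym/eqP.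
by rewrite expf_eq0 /= normr_eq0 => /eqP.
Qed.

Lemma cs_mul_star_eq0 x : mul x (star x) = 0 -> x = 0.
Proof.
rewrite -{1}(cs_starK HB x) => /cs_star_mul_eq0 sx0.
by rewrite -(cs_starK HB x) sx0 cs_star0.
Qed.

Lemma cs_mul_star_sqr_eq0 a :
  mul (mul a (star a)) (mul a (star a)) = 0 -> a = 0.
Proof.
set p := mul a (star a) => pp0; apply: cs_mul_star_eq0; rewrite -/p.
have sp : star p = p by rewrite /p (cs_starM HB) (cs_starK HB).
by apply: cs_star_mul_eq0; rewrite sp.
Qed.

Lemma clspan_sub (S : set V) : S `<=` clspan S.
Proof. by move=> x Sx W _; apply. Qed.

Lemma clspan_mull (S : set V) :
  (forall b s, S s -> S (mul b s)) ->
  forall b x, clspan S x -> clspan S (mul b x).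
Proof.
move=> mulS b x Sx W [[W0 WD] Wcl] SW; apply: (Sx (mul b @^-1` W)).
- split; last by apply: preimage_closed => // y _; apply: cs_continuous_mull.
  split=> [|a y z]; first by rewrite /= cs_mulx0.
  by rewrite /= (cs_mulDr HB) (cs_mulZr HB); apply: WD.
- by move=> s Ss; apply/SW/mulS.
Qed.

Lemma gen_ideal_mul3 (S : set V) b s c :
  S s -> gen_ideal mul S (mul (mul b s) c).
Proof. by move=> Ss; apply: clspan_sub; exists b, s, c. Qed.

Lemma gen_ideal_mull (S : set V) b x :
  gen_ideal mul S x -> gen_ideal mul S (mul b x).
Proof.
apply: clspan_mull => {}b _ [b' [s [c [Ss ->]]]].
by exists (mul b b'), s, c; rewrite !(cs_mulA HB).
Qed.

Lemma gen_ideal_sub (S K : set V) :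
  is_closed_ideal mul K -> S `<=` K -> gen_ideal mul S `<=` K.
Proof.
move=> [Kcl [mullK mulrK]] SK x; apply=> // _ [b [s [c [Ss ->]]]].
exact/mulrK/mullK/SK.
Qed.

Lemma subset_Ann (K L : set V) : K `<=` L -> Ann mul L `<=` Ann mul K.
Proof. by move=> KL x Lx k /KL; apply: Lx. Qed.

Lemma closed_Ann (K : set V) : closed (Ann mul K).
Proof.
have -> : Ann mul K = \bigcap_(k in K) (mul^~ k @^-1` [set 0]).
  by apply/seteqP; split=> x /= Kx k Kk; apply: Kx.
apply: closed_bigI => k _; apply: preimage_closed.
- by move=> x _; apply: cs_continuous_mulr.
- exact/accessible_closed_set1/hausdorff_accessible/norm_hausdorff.
Qed.

Lemma Ann_closed_ideal (K : set V) :
  (forall b k, K k -> K (mul b k)) -> is_closed_ideal mul (Ann mul K).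
Proof.
move=> mulK; split; [split; [split|] | split].
- by move=> k _; apply: cs_mul0x.
- move=> a x y annx anny k Kk.
  by rewrite (cs_mulDl HB) (cs_mulZl HB) annx // anny // scaler0 addr0.
- exact: closed_Ann.
- by move=> b x annx k Kk; rewrite -(cs_mulA HB) annx // cs_mulx0.
- by move=> b x annx k Kk; rewrite -(cs_mulA HB); apply/annx/mulK.
Qed.

Lemma closed_idealI (K L : set V) :
  is_closed_ideal mul K -> is_closed_ideal mul L ->
  is_closed_ideal mul (K `&` L).
Proof.
move=> [[[K0 KD] Kcl] [mullK mulrK]] [[[L0 LD] Lcl] [mullL mulrL]].
split; [split; [split|] | split].
- by [].
- by move=> a x y [Kx Lx] [Ky Ly]; split; [apply: KD | apply: LD].
- exact: closedI.
- by move=> b x [Kx Lx]; split; [apply: mullK | apply: mullL].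
- by move=> b x [Kx Lx]; split; [apply: mulrK | apply: mulrL].
Qed.

Lemma setI_Ann_gen_ideal (S : set V) :
  S `&` Ann mul (gen_ideal mul S) `<=` [set 0].
Proof.
move=> a [Sa annSa]; apply: cs_mul_star_sqr_eq0.
rewrite !(cs_mulA HB) -[mul (mul _ _) a](cs_mulA HB) -(cs_mulA HB).
by apply: annSa; apply: gen_ideal_mul3.
Qed.

Lemma ideal_intersection_property_eq0 (A L : set V) :
  A 0 -> ideal_intersection_property mul A -> is_closed_ideal mul L ->
  L `&` A `<=` [set 0] -> L = [set 0].
Proof.
move=> A0 iipA idealL LA0; apply: contrapT => /(iipA _ idealL); apply.
apply/seteqP; split=> // _ ->; split=> //.
by case: idealL => [[[]]].
Qed.

End CstarAlgebra.

Theorem lemma3p2 (R : realType) (V : completeNormedModType R[i])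
  (mul : V -> V -> V) (star : V -> V)
  (HB : is_Cstar_algebra mul star)
  (A : set V) (HA : is_closed_star_subalgebra mul star A)
  (HIIP : ideal_intersection_property mul A)
  (J : set V) (HJ : is_closed_ideal mul J) :
  Ann mul (gen_ideal mul (J `&` A)) = Ann mul J.
Proof.
set I := gen_ideal mul (J `&` A).
have IJ : I `<=` J by apply: gen_ideal_sub => // x [].
have idealAnnI : is_closed_ideal mul (Ann mul I).
  by apply: (Ann_closed_ideal HB) => b k; apply: (gen_ideal_mull HB).
have L0 : J `&` Ann mul I = [set 0].
  apply: ideal_intersection_property_eq0 HIIP _ _ => //.
  - by case: HA => [[[]]].
  - exact: closed_idealI.
  - by move=> a [[Ja annIa] Aa]; apply: (setI_Ann_gen_ideal HB (J `&` A)).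
apply/seteqP; split; last exact: subset_Ann.
move=> x annIx k Jk; suff : (J `&` Ann mul I) (mul x k) by rewrite L0.
split; first by case: HJ => _ [mullJ _]; apply: mullJ.
by case: idealAnnI => _ [_ mulrAnn]; apply: mulrAnn.
Qed.
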